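(* Let $S_1,\ldots,S_m,S_{m+1},F$ be propositional formulae. If $[S_1,\ldots,S_m,F] \equiv [S_1,\ldots,S_m]$, then $[S_1,\ldots,S_m,S_{m+1},F] \equiv [S_1,\ldots,S_m,S_{m+1}]$.
   Context: Models are truth assignments. For a formula $G$: $I \leq_G J$ iff $I \models G$ or $J \not\models G$. For a sequence $S=[S_1,\ldots,S_m]$: $I \leq_S J$ iff either $S=[]$, or ($I \leq_{S_1} J$ and (either $J \not\leq_{S_1} I$ or $I \leq_R J$)), where $R=[S_2,\ldots,S_m]$. For sequences, $S\equiv R$ means $I \leq_S J$ and $I\leq_R J$ coincide for all pairs of models $I,J$. *)

From Stdlib Require Import List.
Import ListNotations.

Inductive form : Type :=
| Var : nat -> form
| Top : form
| Bot : form
| Neg : form -> form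
| And : form -> form -> form
| Or  : form -> form -> form
| Imp : form -> form -> form.

Definition model := nat -> bool.

Fixpoint sat (I : model) (G : form) : Prop :=
  match G with
  | Var n => I n = true
  | Top => True
  | Bot => False
  | Neg A => ~ sat I A
  | And A B => sat I A /\ sat I B
  | Or A B => sat I A \/ sat I B
  | Imp A B => sat I A -> sat I B
  end.

Definition le_form (G : form) (I J : model) : Prop := sat I G \/ ~ sat J G.

Fixpoint le_seq (S : list form) (I J : model) : Prop :=
  match S with
  | [] => True
  | S1 :: R => le_form S1 I J /\ (~ le_form S1 J I \/ le_seq R I J)
  end.

Definition seq_equiv (S R : list form) : Prop :=
  forall I J : model, le_seq S I J <-> le_seq R I J.

From Stdlib Require Import List Classical.
Import ListNotations.

(* Appending [F] to S changes nothing exactly when F already prefers I to J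
   whenever I and J are tied under S.  Ties under S ++ T are ties under S, so
   this property is inherited by every extension S ++ T. *)

Lemma le_seq_app (S T : list form) (I J : model) :
  le_seq (S ++ T) I J <-> le_seq S I J /\ (~ le_seq S J I \/ le_seq T I J).
Proof.
  induction S as [|G R IH]; simpl.
  - tauto.
  - rewrite IH.
    destruct (classic (le_form G J I)); destruct (classic (le_form G I J)); tauto.
Qed.

Lemma le_seq_app_tie (S T : list form) (I J : model) :
  le_seq (S ++ T) I J -> le_seq (S ++ T) J I -> le_seq S I J /\ le_seq S J I.
Proof. rewrite !le_seq_app; tauto. Qed.

Lemma seq_equiv_snoc (S : list form) (F : form) :
  seq_equiv (S ++ [F]) S <->
  (forall I J : model, le_seq S I J -> le_seq S J I -> le_form F I J).
Proof.
  unfold seq_equiv; split.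
  - intros HF I J HIJ HJI.
    apply HF in HIJ; rewrite le_seq_app in HIJ; simpl in HIJ; tauto.
  - intros HF I J; rewrite le_seq_app; simpl.
    specialize (HF I J); tauto.
Qed.

Lemma seq_equiv_snoc_app (S T : list form) (F : form) :
  seq_equiv (S ++ [F]) S -> seq_equiv ((S ++ T) ++ [F]) (S ++ T).
Proof.
  rewrite !seq_equiv_snoc.
  intros HF I J HIJ HJI.
  destruct (le_seq_app_tie S T I J HIJ HJI).
  auto.
Qed.

Theorem theorem5 (S : list form) (Smp1 F : form) :
  seq_equiv (S ++ [F]) S ->
  seq_equiv (S ++ [Smp1; F]) (S ++ [Smp1]).
Proof.
  intros HF.
  change (seq_equiv (S ++ [Smp1] ++ [F]) (S ++ [Smp1])).
  rewrite app_assoc.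
  exact (seq_equiv_snoc_app S [Smp1] F HF).
Qed.
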